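(* Let $n\geq 2$. Every countable dense $n$-dimensional partial order with realizers is isomorphic to $\mathbf{D}_{n,<_1,\ldots,<_n}=(D_n,<,<_1,\ldots,<_n)$, and $\mathbf{D}_{n,<_1,\ldots,<_n}$ is itself a countable dense $n$-dimensional partial order with realizers; i.e. it is the unique such structure up to isomorphism.
   Context: Fix $n\geq 2$ and a set $D_n\subseteq\mathbb{Q}^n$ which is dense in $\mathbb{Q}^n$ (product topology) and such that no two distinct points of $D_n$ share a common coordinate. On $D_n$, $<$ is the product order ($\mathbf{a}<\mathbf{b}$ iff $a_i\leq b_i$ for all $i$ and $\mathbf{a}\neq\mathbf{b}$) and $<_i$ is the $i$th coordinate order ($\mathbf{a}<_i\mathbf{b}$ iff $a_i<b_i$). An $n$-dimensional partial order with realizers is a structure $(P,<,<_1,\ldots,<_n)$ ($P$ nonempty) where $<_1,\ldots,<_n$ are strict linear orders on $P$ and $a<b$ iff $a<_ib$ for all $i\leq n$. It is dense (i.e. a model of the theory $\mathsf{DPO}_{n,<_1,\ldots,<_n}$) if every region determined by finitely many points is nonempty, precisely: for every nonempty finite $F\subseteq P$ and every choice, for each $i\leq n$, of a ''gap'' of $F$ in $<_i$ — namely a pair $(l_i,r_i)$ with $l_i\in F\cup\{-\infty\}$, $r_i\in F\cup\{+\infty\}$, $l_i<_i r_i$ and no element of $F$ strictly $<_i$-between $l_i$ and $r_i$ — there is $u\in P$ with $l_i<_iu<_ir_i$ for all $i\leq n$ (comparisons with $\pm\infty$ being automatically true). Isomorphisms preserve and reflect all of $<,<_1,\ldots,<_n$.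 *)

From Stdlib Require List.
From mathcomp Require Import all_boot all_order all_algebra.
Set Implicit Arguments. Unset Strict Implicit. Unset Printing Implicit Defensive.
Import Order.TTheory GRing.Theory Num.Theory.
Local Open Scope ring_scope.

Definition strict_linear_order (P : Type) (R : P -> P -> Prop) : Prop :=
  (forall a, ~ R a a) /\
  (forall a b c, R a b -> R b c -> R a c) /\
  (forall a b, a <> b -> R a b \/ R b a).

Definition npo_realizers (n : nat) (P : Type) (lt : P -> P -> Prop)
    (lts : 'I_n -> P -> P -> Prop) : Prop :=
  inhabited P /\
  (forall i, strict_linear_order (lts i)) /\
  (forall a b, lt a b <-> (forall i, lts i a b)).

(* comparisons with -oo (None as lower end) and +oo (None as upper end) *)
Definition lt_low (P : Type) (R : P -> P -> Prop) (l : option P) (u : P) : Prop :=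
  match l with None => True | Some a => R a u end.
Definition lt_up (P : Type) (R : P -> P -> Prop) (u : P) (r : option P) : Prop :=
  match r with None => True | Some b => R u b end.
Definition lt_ends (P : Type) (R : P -> P -> Prop) (l r : option P) : Prop :=
  match l, r with Some a, Some b => R a b | _, _ => True end.

Definition end_in (P : Type) (F : list P) (e : option P) : Prop :=
  match e with None => True | Some a => List.In a F end.

Definition is_gap (P : Type) (R : P -> P -> Prop) (F : list P) (l r : option P) : Prop :=
  end_in F l /\ end_in F r /\ lt_ends R l r /\
  (forall x, List.In x F -> ~ (lt_low R l x /\ lt_up R x r)).

Definition dense_regions (n : nat) (P : Type) (lts : 'I_n -> P -> P -> Prop) : Prop :=
  forall (F : list P) (l r : 'I_n -> option P),
    F <> nil ->
    (forall i, is_gap (lts i) F (l i) (r i)) ->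
    exists u : P, forall i, lt_low (lts i) (l i) u /\ lt_up (lts i) u (r i).

Definition DPO (n : nat) (P : Type) (lt : P -> P -> Prop)
    (lts : 'I_n -> P -> P -> Prop) : Prop :=
  npo_realizers lt lts /\ dense_regions lts.

Definition countable_type (P : Type) : Prop :=
  exists f : P -> nat, forall a b, f a = f b -> a = b.

Definition isomorphic (n : nat)
    (P : Type) (ltP : P -> P -> Prop) (ltsP : 'I_n -> P -> P -> Prop)
    (Q : Type) (ltQ : Q -> Q -> Prop) (ltsQ : 'I_n -> Q -> Q -> Prop) : Prop :=
  exists f : P -> Q,
    (exists g : Q -> P, (forall a, g (f a) = a) /\ (forall b, f (g b) = b)) /\
    (forall a b, ltP a b <-> ltQ (f a) (f b)) /\
    (forall i a b, ltsP i a b <-> ltsQ i (f a) (f b)).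

(* dense in Q^n for the product topology: meets every nonempty basic open box *)
Definition dense_in_Qn (n : nat) (D : {ffun 'I_n -> rat} -> Prop) : Prop :=
  forall a b : {ffun 'I_n -> rat}, (forall i, a i < b i) ->
    exists x, D x /\ (forall i, a i < x i < b i).

Definition distinct_coords (n : nat) (D : {ffun 'I_n -> rat} -> Prop) : Prop :=
  forall x y, D x -> D y -> x <> y -> forall i, x i <> y i.

Definition Dcar (n : nat) (D : {ffun 'I_n -> rat} -> Prop) : Type := {x | D x}.

Definition Dlt (n : nat) (D : {ffun 'I_n -> rat} -> Prop) (a b : Dcar D) : Prop :=
  (forall i, proj1_sig a i <= proj1_sig b i) /\ proj1_sig a <> proj1_sig b.

Definition Dlts (n : nat) (D : {ffun 'I_n -> rat} -> Prop) (i : 'I_n) (a b : Dcar D) : Prop :=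
  proj1_sig a i < proj1_sig b i.

(* Both structures are determined by their realizers, since < is the intersection of
   the <_i.  Density gives each of them the one-point extension property: for a finite
   set F and a downward closed cut of F in every <_i, some point realizes all n cuts
   at once, namely any point of the region bounded by the gaps of F that the cuts
   determine (for D_n, a point of D_n in the corresponding open box of Q^n).  Hence a
   finite partial isomorphism extends by any point on either side, and Cantor's
   back-and-forth along enumerations of the two countable structures yields an
   isomorphism as the union of a chain of partial isomorphisms. *)

From mathcomp Require Import all_boot all_order all_algebra.
From Stdlib Require Import Classical ClassicalEpsilon ProofIrrelevance.
Set Implicit Arguments. Unset Strict Implicit. Unset Printing Implicit Defensive.
Import Order.TTheory GRing.Theory Num.Theory.

Lemma strict_linear_order_flip (T : Type) (R : T -> T -> Prop) :
  strict_linear_order R -> strict_linear_order (fun x y => R y x).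
Proof.
move=> [irr [trans total]]; split; [|split] => //.
- by move=> a b c ba cb; apply: trans cb ba.
- by move=> a b /total [ab|ba]; [right|left].
Qed.

Lemma greatest_or_none (T : Type) (R : T -> T -> Prop) (F : list T) (c : T -> Prop) :
  strict_linear_order R ->
  (forall x, List.In x F -> ~ c x) \/
  exists a, [/\ List.In a F, c a & forall x, List.In x F -> c x -> x = a \/ R x a].
Proof.
move=> [_ [trans total]].
elim: F => [|y F [none|[a [aF ca a_max]]]]; first by left.
- case: (classic (c y)) => cy; last by left => x [<-|/none].
  right; exists y; split=> [|//|x [<-|/none //]]; by left.
- case: (classic (c y /\ R a y)) => [[cy ay]|not_above].
    right; exists y; split=> [|//|x [<-|xF cx]]; [by left|by left|right].
    by case: (a_max x xF cx) => [->|xa] //; apply: trans xa ay.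
  right; exists a; split=> [|//|x [<-|xF cx]]; [by right| |exact: a_max].
  move=> cy; case: (classic (y = a)) => [|/total [ya|ay]]; [by left|by right|].
  by case: not_above.
Qed.

Section Cuts.
Variables (T : Type) (R : T -> T -> Prop).
Hypothesis R_linear : strict_linear_order R.

Definition separates (F : list T) (c : T -> Prop) (l r : option T) : Prop :=
  (forall x u, List.In x F -> c x -> lt_low R l u -> R x u) /\
  (forall x u, List.In x F -> ~ c x -> lt_up R u r -> R u x).

Lemma gap_of_cut (F : list T) (c : T -> Prop) :
  (forall x y, List.In x F -> List.In y F -> R x y -> c y -> c x) ->
  exists l r, is_gap R F l r /\ separates F c l r.
Proof.
move=> c_down; have [irr [trans total]] := R_linear.
have [l [lF lc l_sep]] : exists l, [/\ end_in F l, forall a, l = Some a -> c a &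
    forall x u, List.In x F -> c x -> lt_low R l u -> R x u].
  case: (greatest_or_none F c R_linear) => [none|[a [aF ca a_max]]].
    by exists None; split => // x u xF /(none x xF).
  exists (Some a); split => [//|_ [<-] //|x u xF cx /= au].
  by case: (a_max x xF cx) => [->|xa] //; apply: trans xa au.
have [r [rF rc r_sep]] : exists r, [/\ end_in F r, forall b, r = Some b -> ~ c b &
    forall x u, List.In x F -> ~ c x -> lt_up R u r -> R u x].
  case: (greatest_or_none F (fun x => ~ c x) (strict_linear_order_flip R_linear)).
  - move=> none; exists None; split => // x u xF cx.
    by case: (none x xF cx).
  - move=> [b [bF cb b_min]]; exists (Some b); split => [//|_ [<-] //|x u xF cx /= ub].
    by case: (b_min x xF cx) => [->|bx] //; apply: trans ub bx.
exists l, r; split => //; split; [|split; [|split]] => //.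
- case: l lF lc {l_sep} => [a aF /(_ a erefl) ca|] //.
  case: r rF rc {r_sep} => [b bF /(_ b erefl) cb|] //=.
  have /total [//|ba] : a <> b by move=> ab; apply: cb; rewrite -ab.
  by case: cb; apply: c_down ba ca.
- move=> x xF [lx xr]; case: (classic (c x)) => cx.
  + exact: irr (l_sep x x xF cx lx).
  + exact: irr (r_sep x x xF cx xr).
Qed.
End Cuts.

Definition extension_property (I T : Type) (R : I -> T -> T -> Prop) : Prop :=
  forall (F : list T) (c : I -> T -> Prop),
    (forall i x y, List.In x F -> List.In y F -> R i x y -> c i y -> c i x) ->
    exists u, forall i x, List.In x F -> (c i x -> R i x u) /\ (~ c i x -> R i u x).

Lemma DPO_extension_property (n : nat) (T : Type) (lt : T -> T -> Prop)
    (lts : 'I_n -> T -> T -> Prop) :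
  DPO lt lts -> extension_property lts.
Proof.
move=> [[[t0] [lts_linear _]] dense] F c c_down.
case: (classic (F = nil)) => [->|F_nil]; first by exists t0.
have /choice [lr lr_gap] : forall i, exists lr : option T * option T,
    is_gap (lts i) F lr.1 lr.2 /\ separates (lts i) F (c i) lr.1 lr.2.
  by move=> i; have [l [r gap]] := gap_of_cut (lts_linear i) (c_down i); exists (l, r).
have [u u_in] := dense F _ _ F_nil (fun i => proj1 (lr_gap i)).
exists u => i x xF; have [_ [below above]] := lr_gap i; have [lu ur] := u_in i.
by split => cx; [apply: below lu|apply: above ur].
Qed.

Definition partial_iso (I P Q : Type) (RP : I -> P -> P -> Prop) (RQ : I -> Q -> Q -> Prop)
    (s : list (P * Q)) : Prop :=
  forall x y, List.In x s -> List.In y s -> forall i, RP i x.1 y.1 <-> RQ i x.2 y.2.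

Lemma partial_iso_swap (I P Q : Type) (RP : I -> P -> P -> Prop) (RQ : I -> Q -> Q -> Prop)
    (s : list (P * Q)) :
  partial_iso RQ RP (List.map (fun x => (x.2, x.1)) s) <-> partial_iso RP RQ s.
Proof.
split=> iso x y.
- move=> xs ys i; symmetry.
  exact: iso (List.in_map (fun x => (x.2, x.1)) _ _ xs) (List.in_map _ _ _ ys) i.
- move=> /List.in_map_iff [x' [<- xs]] /List.in_map_iff [y' [<- ys]] i /=.
  by symmetry; apply: iso.
Qed.

Section Forth.
Variables (I P Q : Type) (RP : I -> P -> P -> Prop) (RQ : I -> Q -> Q -> Prop) (i0 : I).
Hypotheses (RP_linear : forall i, strict_linear_order (RP i))
           (RQ_linear : forall i, strict_linear_order (RQ i)).

Lemma partial_iso_injective (s : list (P * Q)) a a' b :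
  partial_iso RP RQ s -> List.In (a, b) s -> List.In (a', b) s -> a = a'.
Proof.
move=> iso ab a'b; apply: NNPP => /(proj2 (proj2 (RP_linear i0))) [aa'|a'a].
- by apply: (proj1 (RQ_linear i0) b); apply/(iso _ _ ab a'b).
- by apply: (proj1 (RQ_linear i0) b); apply/(iso _ _ a'b ab).
Qed.

Lemma linear_compare_iff i a p b q :
  a <> p -> (RP i a p -> RQ i b q) -> (RP i p a -> RQ i q b) ->
  (RP i a p <-> RQ i b q) /\ (RP i p a <-> RQ i q b).
Proof.
have [_ [_ totalP]] := RP_linear i; have [irrQ [transQ _]] := RQ_linear i.
move=> /totalP ap mono_ap mono_pa; split; split=> // cmp.
- by case: ap => // /mono_pa qb; case: (irrQ b); apply: transQ cmp qb.
- by case: ap => // /mono_ap bq'; case: (irrQ b); apply: transQ bq' cmp.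
Qed.

Lemma partial_iso_cons (s : list (P * Q)) p q :
  partial_iso RP RQ s ->
  (forall i a b, List.In (a, b) s ->
     (RP i a p <-> RQ i b q) /\ (RP i p a <-> RQ i q b)) ->
  partial_iso RP RQ ((p, q) :: s).
Proof.
move=> iso new [a b] [a' b'] /= [[<- <-]|ab] [[<- <-]|a'b'] i /=.
- by split=> cmp; [case: (proj1 (RP_linear i) p)|case: (proj1 (RQ_linear i) q)].
- exact: (proj2 (new i _ _ a'b')).
- exact: (proj1 (new i _ _ ab)).
- exact: iso ab a'b' i.
Qed.

Hypothesis RQ_extension : extension_property RQ.

Lemma partial_iso_forth (s : list (P * Q)) p :
  partial_iso RP RQ s -> exists q, partial_iso RP RQ ((p, q) :: s).
Proof.
move=> iso; case: (classic (exists q, List.In (p, q) s)) => [[q pq]|p_new].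
  by exists q => x y /= [<-|xs] [<-|ys]; apply: iso.
pose c i b := exists a, List.In (a, b) s /\ RP i a p.
have c_down : forall i b b', List.In b (List.map snd s) -> List.In b' (List.map snd s) ->
    RQ i b b' -> c i b' -> c i b.
  move=> i b b' /List.in_map_iff [[a b0] [/= -> ab]] _ bb' [a' [a'b' a'p]].
  exists a; split => //; have [_ [transP _]] := RP_linear i.
  by apply: transP a'p; apply/(iso _ _ ab a'b').
have [q q_cut] := RQ_extension c_down.
exists q; apply: partial_iso_cons => // i a b ab.
have bs : List.In b (List.map snd s) by apply/List.in_map_iff; exists (a, b).
have [below above] := q_cut i b bs.
apply: linear_compare_iff.
- by move=> ap; apply: p_new; exists b; rewrite -ap.
- by move=> ap; apply: below; exists a.
- move=> pa; apply: above => -[a' [a'b a'p]].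
  rewrite (partial_iso_injective iso a'b ab) in a'p.
  by have [irrP [transP _]] := RP_linear i; apply: (irrP a); apply: transP a'p pa.
Qed.

End Forth.

Lemma countable_enumeration (T : Type) :
  countable_type T -> exists e : nat -> option T, forall t, exists k, e k = Some t.
Proof.
move=> [code code_inj].
have /choice [e e_code] : forall k, exists o : option T, forall t, code t = k -> o = Some t.
  move=> k; case: (classic (exists t, code t = k)) => [[t <-]|none].
  - by exists (Some t) => t' /code_inj ->.
  - by exists None => t tk; case: none; exists t.
by exists e => t; exists (code t); apply: e_code.
Qed.

Section BackAndForth.
Variables (I P Q : Type) (RP : I -> P -> P -> Prop) (RQ : I -> Q -> Q -> Prop) (i0 : I).
Hypotheses (RP_linear : forall i, strict_linear_order (RP i))
           (RQ_linear : forall i, strict_linear_order (RQ i))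
           (RP_extension : extension_property RP) (RQ_extension : extension_property RQ).

Lemma partial_iso_back (s : list (P * Q)) q :
  partial_iso RP RQ s -> exists p, partial_iso RP RQ ((p, q) :: s).
Proof.
move=> /partial_iso_swap iso.
have [p iso'] := partial_iso_forth i0 RQ_linear RP_linear RP_extension q iso.
by exists p; apply/partial_iso_swap.
Qed.

Lemma partial_iso_functional (s : list (P * Q)) a b b' :
  partial_iso RP RQ s -> List.In (a, b) s -> List.In (a, b') s -> b = b'.
Proof.
move=> /partial_iso_swap iso ab ab'.
apply: (partial_iso_injective i0 RQ_linear RP_linear iso).
- exact: (List.in_map (fun x => (x.2, x.1)) _ _ ab).
- exact: (List.in_map (fun x => (x.2, x.1)) _ _ ab').
Qed.

Lemma partial_iso_extend (s : list (P * Q)) (op : option P) (oq : option Q) :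
  partial_iso RP RQ s -> exists s', [/\ partial_iso RP RQ s', List.incl s s',
    forall p, op = Some p -> exists q, List.In (p, q) s' &
    forall q, oq = Some q -> exists p, List.In (p, q) s'].
Proof.
move=> iso.
have [s1 [iso1 s_s1 dom1]] : exists s1, [/\ partial_iso RP RQ s1, List.incl s s1 &
    forall p, op = Some p -> exists q, List.In (p, q) s1].
  case: op => [p|]; last by exists s; split=> //; apply: List.incl_refl.
  have [q iso1] := partial_iso_forth i0 RP_linear RQ_linear RQ_extension p iso.
  by exists ((p, q) :: s); split=> // [|_ [<-]]; [apply: List.incl_tl | exists q; left].
case: oq => [q|]; last by exists s1; split=> //; apply: List.incl_refl.
have [p iso2] := partial_iso_back q iso1.
exists ((p, q) :: s1); split=> // [|p' /dom1 [q' p'q']|_ [<-]].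
- by apply: List.incl_tl.
- by exists q'; right.
- by exists p; left.
Qed.

Lemma exhaustive_partial_iso_chain :
  countable_type P -> countable_type Q ->
  exists chain : nat -> list (P * Q),
    [/\ forall k, partial_iso RP RQ (chain k),
        {homo chain : k m / (k <= m)%N >-> List.incl k m},
        forall p, exists q k, List.In (p, q) (chain k) &
        forall q, exists p k, List.In (p, q) (chain k)].
Proof.
move=> /countable_enumeration [eP eP_onto] /countable_enumeration [eQ eQ_onto].
pose iso_list := {s | partial_iso RP RQ s}.
have /choice [step step_ok] : forall x : nat * iso_list, exists s' : iso_list,
    [/\ List.incl (sval x.2) (sval s'),
        forall p, eP x.1 = Some p -> exists q, List.In (p, q) (sval s') &
        forall q, eQ x.1 = Some q -> exists p, List.In (p, q) (sval s')].
  move=> [k [s iso]].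
  have [s' [iso' ss' dom ran]] := partial_iso_extend (eP k) (eQ k) iso.
  by exists (exist _ s' iso').
have iso_nil : partial_iso RP RQ nil by [].
pose stage k := iteri k (fun k s => step (k, s)) (exist _ nil iso_nil).
exists (fun k => sval (stage k)); split=> [k|||].
- exact: svalP.
- apply: (homo_leq (r := @List.incl _)) => [s|s s' s''|k].
  + exact: List.incl_refl.
  + exact: List.incl_tran.
  + by have [] := step_ok (k, stage k).
- move=> p; have [k ek] := eP_onto p; have [_ dom _] := step_ok (k, stage k).
  by have [q pq] := dom p ek; exists q, k.+1.
- move=> q; have [k ek] := eQ_onto q; have [_ _ ran] := step_ok (k, stage k).
  by have [p pq] := ran q ek; exists p, k.+1.
Qed.

Lemma countable_back_and_forth :
  countable_type P -> countable_type Q ->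
  exists (f : P -> Q) (g : Q -> P),
    [/\ cancel f g, cancel g f & forall i a b, RP i a b <-> RQ i (f a) (f b)].
Proof.
move=> P_countable Q_countable.
have [chain [chain_iso chain_mono P_covered Q_covered]] :=
  exhaustive_partial_iso_chain P_countable Q_countable.
have in_common x y k m : List.In x (chain k) -> List.In y (chain m) ->
    List.In x (chain (maxn k m)) /\ List.In y (chain (maxn k m)).
  move=> xk ym; split.
  - by apply: chain_mono xk; apply: leq_maxl.
  - by apply: chain_mono ym; apply: leq_maxr.
have /choice [f f_in] := P_covered; have /choice [g g_in] := Q_covered.
exists f, g; split.
- move=> p; have [k pk] := f_in p; have [m qm] := g_in (f p).
  have [pj qj] := in_common _ _ _ _ pk qm.
  by symmetry; apply: partial_iso_injective (chain_iso _) pj qj.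
- move=> q; have [k pk] := g_in q; have [m qm] := f_in (g q).
  have [pj qj] := in_common _ _ _ _ pk qm.
  by apply: partial_iso_functional (chain_iso _) qj pj.
- move=> i a b; have [k ak] := f_in a; have [m bm] := f_in b.
  have [aj bj] := in_common _ _ _ _ ak bm.
  exact: chain_iso aj bj i.
Qed.

End BackAndForth.

Lemma isomorphic_of_realizers (n : nat) (P : Type) (ltP : P -> P -> Prop)
    (ltsP : 'I_n -> P -> P -> Prop) (Q : Type) (ltQ : Q -> Q -> Prop)
    (ltsQ : 'I_n -> Q -> Q -> Prop) (f : P -> Q) (g : Q -> P) :
  npo_realizers ltP ltsP -> npo_realizers ltQ ltsQ -> cancel f g -> cancel g f ->
  (forall i a b, ltsP i a b <-> ltsQ i (f a) (f b)) -> isomorphic ltP ltsP ltQ ltsQ.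
Proof.
move=> [_ [_ ltP_realized]] [_ [_ ltQ_realized]] fK gK f_lts.
exists f; split; first by exists g.
split=> // a b; rewrite ltP_realized ltQ_realized.
by split=> lt_ab i; apply/f_lts.
Qed.

Local Open Scope ring_scope.

Section Dn.
Variables (n : nat) (D : {ffun 'I_n -> rat} -> Prop).

Lemma Dcar_val_inj (a b : Dcar D) : proj1_sig a = proj1_sig b -> a = b.
Proof. exact: (@eq_sig_hprop _ D (fun x => @proof_irrelevance (D x)) a b). Qed.

Lemma countable_Dcar : countable_type (Dcar D).
Proof.
exists (fun a => pickle (proj1_sig a)) => a b /(pcan_inj pickleK) ab.
exact: Dcar_val_inj.
Qed.

Hypothesis D_distinct : distinct_coords D.

Lemma Dlts_linear i : strict_linear_order (Dlts (D:=D) i).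
Proof.
rewrite /Dlts; split; [|split].
- by move=> a; rewrite ltxx.
- by move=> a b c; apply: lt_trans.
- move=> a b ab; have /D_distinct : proj1_sig a <> proj1_sig b by move/Dcar_val_inj.
  move=> /(_ (proj2_sig a) (proj2_sig b) i).
  by case: ltgtP => //; [left|right].
Qed.

Lemma Dlt_realized (i0 : 'I_n) (a b : Dcar D) : Dlt a b <-> forall i, Dlts i a b.
Proof.
rewrite /Dlt /Dlts; split=> [[le_ab ab] i|lt_ab].
- by rewrite lt_neqAle le_ab andbT; apply/eqP/(D_distinct (proj2_sig a) (proj2_sig b)).
- by split=> [i|ab]; [apply: ltW|move: (lt_ab i0); rewrite ab ltxx].
Qed.

Hypothesis D_dense : dense_in_Qn D.

Lemma npo_realizers_D (i0 : 'I_n) : npo_realizers (Dlt (D:=D)) (Dlts (D:=D)).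
Proof.
split; last by split; [apply: Dlts_linear|apply: Dlt_realized].
have [x [Dx _]] := D_dense (a := [ffun _ => 0]) (b := [ffun _ => 1])
  (fun i => ltac:(by rewrite !ffunE ltr01)).
by constructor; exists x.
Qed.

(* Only the ends of the gaps matter: D meets the open box they span, whose
   unbounded sides are given length 1. *)
Lemma dense_regions_D : dense_regions (Dlts (D:=D)).
Proof.
move=> F l r _ gap.
pose lo i := match l i, r i with
  | Some a, _ => proj1_sig a i | None, Some b => proj1_sig b i - 1 | None, None => 0 end.
pose hi i := match r i, l i with
  | Some b, _ => proj1_sig b i | None, Some a => proj1_sig a i + 1 | None, None => 1 end.
have lo_hi i : [ffun i => lo i] i < [ffun i => hi i] i.
  rewrite !ffunE /lo /hi; have [_ [_ [lr _]]] := gap i; move: lr.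
  by case: (l i) => [a|]; case: (r i) => [b|] //= _; rewrite ?ltrDl ?gtrBl ?ltr01.
have [x [Dx x_in]] := D_dense lo_hi.
exists (exist _ x Dx) => i; move: (x_in i); rewrite !ffunE /lo /hi /Dlts /=.
by case: (l i) => [a|]; case: (r i) => [b|] /= /andP [].
Qed.

End Dn.

Theorem theorem4p5 (n : nat) (D : {ffun 'I_n -> rat} -> Prop) :
  (2 <= n)%N -> dense_in_Qn D -> distinct_coords D ->
  (countable_type (Dcar D) /\ DPO (Dlt (D:=D)) (Dlts (D:=D))) /\
  (forall (P : Type) (lt : P -> P -> Prop) (lts : 'I_n -> P -> P -> Prop),
      countable_type P -> DPO lt lts ->
      isomorphic lt lts (Dlt (D:=D)) (Dlts (D:=D))).
Proof.
move=> n_ge2 D_dense D_distinct.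
pose i0 : 'I_n := Ordinal (leq_trans (isT : (0 < 2)%N) n_ge2).
have DPO_D : DPO (Dlt (D:=D)) (Dlts (D:=D)).
  by split; [apply: npo_realizers_D|apply: dense_regions_D].
split=> [|P lt lts P_countable DPO_P]; first exact: conj (countable_Dcar D) DPO_D.
have [f [g [fK gK f_lts]]] := countable_back_and_forth i0
  (proj1 (proj2 (proj1 DPO_P))) (Dlts_linear D_distinct)
  (DPO_extension_property DPO_P) (DPO_extension_property DPO_D)
  P_countable (countable_Dcar D).
exact: isomorphic_of_realizers (proj1 DPO_P) (proj1 DPO_D) fK gK f_lts.
Qed.
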